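(* Let $V$ be a real Banach space and $X\subseteq V$ a convex subspace. Then $X$ has the homotopy fixed point property if and only if $X$ is a singleton.
   Context: A topological space $X$ has the homotopy fixed point property if for every continuous map $f\colon I\times X\to X$, where $I=[0,1]$, there exists a continuous map $p\colon I\to X$ with $f(t,p(t))=p(t)$ for all $t\in I$. *)

From HB Require Import structures.
From mathcomp Require Import all_boot all_order all_algebra.
From mathcomp Require Import all_classical all_reals all_analysis.
Set Implicit Arguments. Unset Strict Implicit. Unset Printing Implicit Defensive.
Import Order.TTheory GRing.Theory Num.Theory.
Import numFieldNormedType.Exports.
Local Open Scope classical_set_scope.
Local Open Scope ring_scope.

Definition unit_itv (R : realType) : set R := [set` `[(0:R), 1]].
Arguments unit_itv R : clear implicits.

(* Homotopy fixed point property of the subspace A of a topological space T: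
   every continuous map f : I x A -> A (given as a function on R x T whose
   restriction to I x A is continuous, for the subspace topology, and takes
   values in A) admits a continuous p : I -> A with f(t, p t) = p t on I. *)
Definition homotopy_fpp (R : realType) (T : topologicalType) (A : set T) : Prop :=
  forall f : R -> T -> T,
    {within unit_itv R `*` A, continuous (fun q : R * T => f q.1 q.2)} ->
    (forall t x, unit_itv R t -> A x -> A (f t x)) ->
    exists p : R -> T,
      [/\ {within unit_itv R, continuous p},
          (forall t, unit_itv R t -> A (p t)) &
          (forall t, unit_itv R t -> f t (p t) = p t)].

From HB Require Import structures.
From mathcomp Require Import all_boot all_order all_algebra.
From mathcomp Require Import all_classical all_reals all_analysis.
From mathcomp Require Import lra.
Import Order.TTheory GRing.Theory Num.Theory.
Import numFieldNormedType.Exports.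
Local Open Scope classical_set_scope.
Local Open Scope ring_scope.

(* A singleton trivially has the property, and a path of fixed points of the
   projection (t, x) |-> x shows that the set is nonempty.  If a convex set X
   contains two points a != b, the ratio r x = |x - a| / (|x - a| + |x - b|) is
   continuous and is the affine parameter on the segment [a, b], which lies in X.
   The homotopy sending x to the point of [a, b] with parameter
   clamp01 (r x + t - 1/2) has no continuous path p of fixed points: r (p t)
   would be 0 for t < 1/2 and 1 for t > 1/2, against the intermediate value
   theorem. *)

Definition clamp01 {R : realType} (v : R) : R := Num.min 1 (Num.max 0 v).

Lemma clamp01_cases {R : realType} (v : R) :
  [\/ v <= 0 /\ clamp01 v = 0, 1 <= v /\ clamp01 v = 1
    | 0 <= v <= 1 /\ clamp01 v = v].
Proof.
rewrite /clamp01 maxEle minEle.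
have [v0|v0] := leP 0 v; last by rewrite ler10; apply: Or31; split=> //; exact: ltW.
have [v1|v1] := leP 1 v; first by apply: Or32.
by apply: Or33; rewrite (ltW v1).
Qed.

Lemma clamp01_itv {R : realType} (v : R) : 0 <= clamp01 v <= 1.
Proof. by case: (clamp01_cases v) => [[_ ->]|[_ ->]|[? ->]]; rewrite ?lexx ?ler01. Qed.

Lemma clamp01_continuous {R : realType} {T : topologicalType} (g : T -> R) :
  continuous g -> continuous (clamp01 \o g).
Proof.
move=> gc; apply: min_fun_continuous; first exact: cst_continuous.
by apply: max_fun_continuous => //; exact: cst_continuous.
Qed.

Lemma clamp01_shift_fixed_neg {R : realType} (u s : R) :
  s < 0 -> clamp01 (u + s) = u -> u = 0.
Proof. by move=> s0; case: (clamp01_cases (u + s)) => [[_ ->]|[? ->]|[_ ->]] //; lra. Qed.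

Lemma clamp01_shift_fixed_pos {R : realType} (u s : R) :
  0 < s -> clamp01 (u + s) = u -> u = 1.
Proof. by move=> s0; case: (clamp01_cases (u + s)) => [[? ->]|[_ ->]|[_ ->]] //; lra. Qed.

Lemma step_not_continuous {R : realType} (q : R -> R) (a c b : R) :
  a < c < b -> {within `[a, b], continuous q} ->
  (forall t, a <= t < c -> q t = 0) -> (forall t, c < t <= b -> q t = 1) -> False.
Proof.
move=> /andP[ac cb] qc q0 q1.
have qa : q a = 0 by apply: q0; rewrite lexx ac.
have qb : q b = 1 by apply: q1; rewrite lexx cb.
(* an intermediate value other than 0 and 1 can only be taken at [c] *)
have at_c v : 0 < v < 1 -> q c = v.
  move=> /andP[v0 v1].
  have [|t] := IVT (ltW (lt_trans ac cb)) qc (v := v).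
    by rewrite qa qb minEle maxEle ler01 !ltW.
  rewrite in_itv /= => /andP[ta tb] qt.
  have [tc|tc|<-] := ltgtP t c => //.
    by move: qt; rewrite q0 ?ta //; lra.
  by move: qt; rewrite q1 ?tc //; lra.
have := at_c 4^-1; have := at_c (3 / 4); lra.
Qed.

Definition vline_path {R : nzRingType} {V : lmodType R} (a b : V) (t : R) : V :=
  (1 - t) *: a + t *: b.

Lemma vline_pathBl {R : nzRingType} {V : lmodType R} (a b : V) t :
  vline_path a b t - a = t *: (b - a).
Proof.
rewrite /vline_path scalerBl scale1r scalerBr.
by rewrite addrAC [a - _ - _]addrAC subrr add0r addrC.
Qed.

Lemma vline_pathBr {R : nzRingType} {V : lmodType R} (a b : V) t :
  vline_path a b t - b = (1 - t) *: (a - b).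
Proof.
rewrite /vline_path scalerBr -addrA; congr (_ + _).
by rewrite scalerBl scale1r opprB addrC.
Qed.

Lemma convex_vline_path {R : numDomainType} {V : lmodType R} (X : set V) (a b : V) t :
  convex_set X -> X a -> X b -> 0 <= t <= 1 -> X (vline_path a b t).
Proof.
move=> cX Xa Xb /andP[t0 t1].
have := cX b a (Itv01 t0 t1) (mem_set Xb) (mem_set Xa).
by rewrite inE /vline_path addrC.
Qed.

Section distance_ratio.
Context {R : realType} {V : normedModType R}.

Definition dist_ratio (a b x : V) : R := `|x - a| / (`|x - a| + `|x - b|).

Context {a b : V} (ab : a != b).

Lemma dist_ratio_denom_gt0 x : 0 < `|x - a| + `|x - b|.
Proof.
rewrite lt_neqAle addr_ge0 // andbT eq_sym paddr_eq0 // !normr_eq0 !subr_eq0.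
by apply: contra ab => /andP[/eqP <- /eqP <-].
Qed.

Lemma dist_ratio_continuous : continuous (dist_ratio a b).
Proof.
have dist_cont (c : V) : continuous (fun x : V => `|x - c|).
  move=> x; apply: (continuous_comp (f := fun x : V => x - c)).
    by apply: continuousB => //; exact: cst_continuous.
  exact: norm_continuous.
move=> x; apply: (@continuousM _ _ (fun x => `|x - a|) (fun x => _^-1)).
  exact: dist_cont.
apply: continuousV; first by rewrite gt_eqF ?dist_ratio_denom_gt0.
by apply: (@continuousD _ _ _ (fun x => `|x - a|) (fun x => `|x - b|));
  exact: dist_cont.
Qed.

Lemma vline_pathK t : 0 <= t <= 1 -> dist_ratio a b (vline_path a b t) = t.
Proof.
move=> /andP[t0 t1]; rewrite /dist_ratio vline_pathBl vline_pathBr.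
have nba : `|b - a| != 0 by rewrite normr_eq0 subr_eq0 eq_sym.
rewrite !normrZ (ger0_norm t0) ger0_norm ?subr_ge0 // [`|a - b|]distrC.
by rewrite -mulrDl [t + _]addrC subrK mul1r mulfK.
Qed.

End distance_ratio.

Lemma vline_path_continuous {R : realType} {V : normedModType R} {T : topologicalType}
    (a b : V) (g : T -> R) :
  continuous g -> continuous (fun z => vline_path a b (g z)).
Proof.
move=> gc z; apply: (@continuousD _ _ _ (fun z => (1 - g z) *: a) (fun z => g z *: b)).
  by apply: continuousZr_tmp; exact: (continuousB (@cst_continuous T R 1 z) (gc z)).
exact: continuousZr_tmp (gc z).
Qed.

Section crossing_homotopy.
Context {R : realType} {V : normedModType R} (a b : V) (ab : a != b).

Definition crossing_homotopy (t : R) (x : V) : V :=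
  vline_path a b (clamp01 (dist_ratio a b x + (t - 2^-1))).

Lemma crossing_homotopy_continuous :
  continuous (fun q : R * V => crossing_homotopy q.1 q.2).
Proof.
apply: vline_path_continuous; apply: clamp01_continuous => q.
apply: (@continuousD _ _ _ (fun q : R * V => dist_ratio a b q.2) (fun q => q.1 - 2^-1)).
  apply: (continuous_comp (f := snd)); last exact: (dist_ratio_continuous ab).
  exact: cvg_snd.
apply: (@continuousB _ _ _ (fun q : R * V => q.1) (fun=> 2^-1)).
  exact: cvg_fst.
exact: cst_continuous.
Qed.

Lemma crossing_homotopy_in (X : set V) t x :
  convex_set X -> X a -> X b -> X (crossing_homotopy t x).
Proof. by move=> cX Xa Xb; apply: convex_vline_path; rewrite ?clamp01_itv. Qed.

Lemma crossing_homotopy_fixed t x : crossing_homotopy t x = x ->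
  clamp01 (dist_ratio a b x + (t - 2^-1)) = dist_ratio a b x.
Proof. by move=> {2}<-; rewrite (vline_pathK ab) ?clamp01_itv. Qed.

Lemma crossing_homotopy_no_fixed_path (p : R -> V) :
  {within unit_itv R, continuous p} ->
  ~ (forall t, unit_itv R t -> crossing_homotopy t (p t) = p t).
Proof.
move=> pc pfix; pose q t := dist_ratio a b (p t).
have qc : {within `[0, 1], continuous q}.
  by move=> t; apply: continuous_comp (pc t) (dist_ratio_continuous ab (p t)).
have qfix t : 0 <= t <= 1 -> clamp01 (q t + (t - 2^-1)) = q t.
  by move=> t01; apply/crossing_homotopy_fixed/pfix; rewrite /unit_itv /= in_itv.
apply: (@step_not_continuous R q 0 2^-1 1 _ qc).
- by apply/andP; split; lra.
- move=> t /andP[t0 th]; apply: (@clamp01_shift_fixed_neg R _ (t - 2^-1)); first lra.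
  by apply: qfix; apply/andP; split; lra.
- move=> t /andP[th t1]; apply: (@clamp01_shift_fixed_pos R _ (t - 2^-1)); first lra.
  by apply: qfix; apply/andP; split; lra.
Qed.

End crossing_homotopy.

Lemma homotopy_fpp_neq0 {R : realType} {T : topologicalType} {A : set T} :
  homotopy_fpp R A -> A !=set0.
Proof.
move=> hA; have sndc : {within unit_itv R `*` A, continuous (fun q : R * T => q.2)}.
  by apply: continuous_subspaceT => q; exact: cvg_snd.
have [p [_ pA _]] := hA (fun _ x => x) sndc (fun _ _ _ Ax => Ax).
by exists (p 0); apply: pA; rewrite /unit_itv /= in_itv /= lexx ler01.
Qed.

Lemma homotopy_fpp_set1 (R : realType) {T : topologicalType} (x : T) :
  homotopy_fpp R [set x].
Proof.
move=> f _ fx; exists (fun=> x); split=> //.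
- by apply: continuous_subspaceT; exact: cst_continuous.
- by move=> t It; exact: fx.
Qed.

Lemma convex_homotopy_fpp_eq {R : realType} {V : normedModType R} {X : set V} {a b : V} :
  convex_set X -> homotopy_fpp R X -> X a -> X b -> a = b.
Proof.
move=> cX hX Xa Xb; have [//|ab] := eqVneq a b; exfalso.
have fc := continuous_subspaceT (A := unit_itv R `*` X)
  (crossing_homotopy_continuous a b ab).
have [p [pc _ pfix]] :=
  hX _ fc (fun t x _ _ => crossing_homotopy_in a b X t x cX Xa Xb).
exact: (crossing_homotopy_no_fixed_path a b ab p pc pfix).
Qed.

Theorem theorem4p5 (R : realType) (V : completeNormedModType R) (X : set V) :
  @convex_set R V X ->
  (@homotopy_fpp R V X <-> exists x : V, X = [set x]).
Proof.
move=> cX; split; last by move=> [x ->]; exact: homotopy_fpp_set1.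
move=> hX; have [x Xx] := homotopy_fpp_neq0 hX.
exists x; apply/seteqP; split=> [y Xy|y ->] //=.
exact: convex_homotopy_fpp_eq cX hX Xy Xx.
Qed.
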